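(* For every integer $t\ge 2$, Waiter wins the $(1:1)$ Client-Waiter vertex $K_3$-game played on the graph $DD_t$.
   Context: For $t\ge 2$, $DD_t$ is the graph obtained as follows: take triangles $a_ib_ic_i$ for $i=1,\dots,t$ on vertices where $c_i=a_{i+1}$ for $1\le i<t$ and all other listed vertices are distinct (a chain of $t$ triangles, consecutive ones sharing exactly one vertex, nonconsecutive ones disjoint), and add two new vertices $x,y$ together with the triangles $a_1c_1y$ and $a_tc_tx$ (i.e., edges $ya_1,yc_1,xa_t,xc_t$). The $(1:1)$ Client-Waiter vertex $K_3$-game on a graph: in each round Waiter offers one or two unclaimed vertices, Client claims one and Waiter the other (if any); Client wins if the subgraph induced by his vertices contains a triangle, otherwise Waiter wins. *)

From mathcomp Require Import all_boot.
Set Implicit Arguments. Unset Strict Implicit. Unset Printing Implicit Defensive.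

Definition has_triangle (V : finType) (e : rel V) (C : {set V}) : bool :=
  [exists u : V, exists v : V, exists w : V,
    [&& u \in C, v \in C, w \in C, u != v, v != w, u != w,
        e u v, e v w & e u w]].

(* Since the game is
   finite, the inductive predicate is exactly the existence of a winning
   strategy for Waiter. *)
Inductive waiter_wins (V : finType) (e : rel V) : {set V} -> {set V} -> Prop :=
| ww_end C W :
    (forall v : V, v \in C :|: W) -> ~~ has_triangle e C -> waiter_wins e C W
| ww_one C W u :
    u \notin C :|: W -> waiter_wins e (u |: C) W -> waiter_wins e C W
| ww_two C W u v :
    u != v -> u \notin C :|: W -> v \notin C :|: W ->
    waiter_wins e (u |: C) (v |: W) -> waiter_wins e (v |: C) (u |: W) ->
    waiter_wins e C W.

Definition waiter_wins_game (V : finType) (e : rel V) : Prop :=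
  waiter_wins e set0 set0.

(** Encoding (0-based k = 0..t-1 for triangle number k+1):
     a_{k+1} = k  (k = 0..t, with c_{k+1} = a_{k+2} = k+1, c_t = t),
     b_{k+1} = t+1+k  (k = 0..t-1),
     x = 2t+1,  y = 2t+2.
   Edges: for each k < t the triangle {k, k+1, t+1+k};
   y adjacent to a_1 = 0 and c_1 = 1;  x adjacent to a_t = t-1 and c_t = t. *)
Definition dd_base (t u v : nat) : bool :=
  [exists k : 'I_t,
     [|| (u == k) && (v == k.+1),
         (u == k) && (v == t.+1 + k) |
         (u == k.+1) && (v == t.+1 + k)]]
  || [|| (u == 0) && (v == (2 * t).+2),
         (u == 1) && (v == (2 * t).+2),
         (u == t.-1) && (v == (2 * t).+1) |
         (u == t) && (v == (2 * t).+1)].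

Definition dd_adj (t : nat) : rel 'I_((2 * t).+3) :=
  fun u v => dd_base t u v || dd_base t v u.
Arguments dd_adj t : clear implicits.

From mathcomp Require Import all_boot zify.
Set Implicit Arguments. Unset Strict Implicit. Unset Printing Implicit Defensive.

(* Waiter first offers b_1 and x.  Whichever one Client takes, Waiter continues
   with a pairing strategy: she fixes a matching such that every triangle
   contains either the vertex she has just received or a matched pair, and
   offers the two vertices of a pair together, so that Client never owns both.
   If Client took b_1, the pairs are a_1c_1 and c_kb_k (2 <= k <= t); if he took
   x, they are a_1y, a_tc_t and a_kb_k (2 <= k < t). *)

Definition triangle (V : eqType) (e : rel V) (u v w : V) : bool :=
  [&& u != v, v != w, u != w, e u v, e v w & e u w].

Lemma has_triangleP (V : finType) (e : rel V) (C : {set V}) :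
  reflect (exists u v w, [/\ u \in C, v \in C, w \in C & triangle e u v w])
          (has_triangle e C).
Proof.
apply: (iffP existsP) => [[u /existsP [v /existsP [w /and4P [uC vC wC tri]]]]|].
  by exists u, v, w.
by case=> u [v [w [uC vC wC tri]]]; exists u; apply/existsP; exists v;
  apply/existsP; exists w; rewrite uC vC wC.
Qed.

Lemma card_setC_U1 (V : finType) (S : {set V}) a :
  a \notin S -> #|~: (a |: S)| < #|~: S|.
Proof.
by move=> aS; have := cardsC S; have := cardsC (a |: S); rewrite cardsU1 aS; lia.
Qed.

Lemma disjoint_setU1 (T : finType) (A B : {set T}) x :
  [disjoint x |: A & B] = (x \notin B) && [disjoint A & B].
Proof. by rewrite -setI_eq0 setIUl setU_eq0 !setI_eq0 disjoints1. Qed.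

Section Blocked.
Variables (T : eqType) (p : rel T) (W : pred T).

Definition blocked (a b c : T) : bool :=
  [|| W a, W b | W c] || [|| p a b, p b c | p a c].

Lemma blocked_claimed3 a b c : W c -> blocked a b c.
Proof. by rewrite /blocked => ->; rewrite !orbT. Qed.

Lemma blocked_pair12 a b c : p a b -> blocked a b c.
Proof. by rewrite /blocked => ->; rewrite orbT. Qed.

Lemma blocked_pair23 a b c : p b c -> blocked a b c.
Proof. by rewrite /blocked => ->; rewrite !orbT. Qed.

Lemma blocked_pair13 a b c : p a c -> blocked a b c.
Proof. by rewrite /blocked => ->; rewrite !orbT. Qed.

Hypothesis p_sym : symmetric p.

Lemma blocked_swap12 a b c : blocked a b c -> blocked b a c.
Proof.
rewrite /blocked (p_sym b a).
by move: (W a) (W b) (W c) (p a b) (p b c) (p a c) => [] [] [] [] [] [].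
Qed.

Lemma blocked_swap23 a b c : blocked a b c -> blocked a c b.
Proof.
rewrite /blocked (p_sym c b).
by move: (W a) (W b) (W c) (p a b) (p b c) (p a c) => [] [] [] [] [] [].
Qed.

End Blocked.

Lemma blockedW (T : eqType) (p : rel T) (W W' : pred T) a b c :
  subpred W W' -> blocked p W a b c -> blocked p W' a b c.
Proof.
by rewrite /blocked => sWW' /orP [/or3P [] /sWW' -> | ->]; rewrite /= ?orbT.
Qed.

Section PairingStrategy.
Variables (V : finType) (e p : rel V).
Hypotheses (p_sym : symmetric p) (p_irr : irreflexive p).
Hypothesis p_fun : forall a b c, p a b -> p a c -> b = c.

Definition pairing_blocks (W : {set V}) :=
  forall u v w, triangle e u v w -> blocked p [in W] u v w.

Definition pairing_respected (C W : {set V}) :=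
  forall a b, p a b -> a \in C -> b \in W.

Lemma pairing_blocksU1 W a : pairing_blocks W -> pairing_blocks (a |: W).
Proof.
by move=> blockW u v w /blockW; apply: blockedW => z zW; rewrite in_setU1 zW orbT.
Qed.

Lemma pairing_no_triangle (C W : {set V}) :
  [disjoint C & W] -> pairing_respected C W -> pairing_blocks W ->
  ~~ has_triangle e C.
Proof.
move=> CW pCW blockW; apply/has_triangleP => -[u [v [w [uC vC wC /blockW]]]].
have notW z : z \in C -> z \in W = false by apply: disjointFr.
by rewrite /blocked /= !notW //= => /or3P [] /pCW;
  [move/(_ uC) | move/(_ vC) | move/(_ uC)]; rewrite notW.
Qed.

(* Waiter offers a free vertex together with its partner when the partner is
   free too, and alone otherwise. *)
Lemma waiter_wins_pairing (C W : {set V}) :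
  [disjoint C & W] -> pairing_respected C W -> pairing_blocks W ->
  waiter_wins e C W.
Proof.
have [n] := ubnP #|~: (C :|: W)|; elim: n => // n IH in C W *.
rewrite ltnS => size_free CW pCW blockW.
have [u /= u_free|all_claimed] := pickP (fun u => u \notin C :|: W); last first.
  apply: ww_end; last exact: pairing_no_triangle CW pCW blockW.
  by move=> v; apply/negbFE; exact: all_claimed.
have [uC uW] : u \notin C /\ u \notin W by move: u_free; rewrite inE negb_or => /andP.
have [b /= /andP [pub b_free]|no_free_partner] :=
  pickP (fun b => p u b && (b \notin C :|: W)).
  have claim_pair a c : p a c -> a \notin C :|: W -> c \notin C :|: W ->
      waiter_wins e (a |: C) (c |: W).
    move=> pac a_free c_free; move: (a_free) (c_free); rewrite !inE !negb_or.
    case/andP=> aC aW /andP [cC cW].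
    have ac : a != c by apply: contraTneq pac => ->; rewrite p_irr.
    apply: IH; last exact: pairing_blocksU1.
    - have a_free_c : a \notin c |: (C :|: W) by rewrite in_setU1 negb_or ac a_free.
      rewrite -setUA (setUCA C); apply: leq_trans (card_setC_U1 a_free_c) _.
      exact: ltnW (leq_trans (card_setC_U1 c_free) size_free).
    - rewrite disjoint_setU1 in_setU1 negb_or ac aW disjoint_sym.
      by rewrite disjoint_setU1 cC disjoint_sym.
    - move=> x y pxy; rewrite !inE => /orP [/eqP xa|/(pCW _ _ pxy) ->]; last first.
        by rewrite orbT.
      by rewrite (p_fun pxy (_ : p x c)) ?eqxx // xa.
  have ub : u != b by apply: contraTneq pub => ->; rewrite p_irr.
  apply: (ww_two ub u_free b_free); first exact: claim_pair.
  by apply: claim_pair; rewrite // p_sym.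
apply: (ww_one u_free); apply: IH => //.
- by rewrite -setUA; exact: leq_trans (card_setC_U1 u_free) size_free.
- by rewrite disjoint_setU1 uW.
move=> x y pxy; rewrite !inE => /orP [/eqP xu|/(pCW _ _ pxy) //].
have /negbT := no_free_partner y; rewrite -xu pxy /= negbK inE.
by case/orP=> // yC; case/negP: uW; rewrite -xu (pCW y) // p_sym.
Qed.

End PairingStrategy.

Lemma triangle_sorted_ind (e : rel nat) (Q : nat -> nat -> nat -> bool) :
  symmetric e ->
  (forall u v w, Q u v w -> Q v u w) -> (forall u v w, Q u v w -> Q u w v) ->
  (forall u v w, u < v -> v < w -> e u v -> e v w -> e u w -> Q u v w) ->
  forall u v w, triangle e u v w -> Q u v w.
Proof.
move=> e_sym Q12 Q23 Q_sorted u v w /and3P [uv vw /and4P [uw euv evw euw]].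
have evu : e v u by rewrite e_sym.
have ewv : e w v by rewrite e_sym.
have ewu : e w u by rewrite e_sym.
have [lt_uv|lt_vu] : u < v \/ v < u by lia.
all: have [lt_vw|lt_wv] : v < w \/ w < v by lia.
all: have [lt_uw|lt_wu] : u < w \/ w < u by lia.
all: try lia.
- exact: Q_sorted.
- by apply: (Q23); apply: (Q_sorted).
- by apply: (Q23); apply: (Q12); apply: (Q_sorted).
- by apply: (Q12); apply: (Q_sorted).
- by apply: (Q12); apply: (Q23); apply: (Q_sorted).
- by apply: (Q12); apply: (Q23); apply: (Q12); apply: (Q_sorted).
Qed.

Definition sym_closure (T : Type) (r : rel T) : rel T := fun a b => r a b || r b a.

Lemma sym_closure_sym (T : Type) (r : rel T) : symmetric (sym_closure r).
Proof. by move=> a b; rewrite /sym_closure orbC. Qed.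

Section DD.
Variable t : nat.
Local Notation n := (2 * t).+3.
Local Notation dd := (sym_closure (dd_base t)).

Lemma dd_edge_sorted u v : u < v -> dd u v ->
  v = u.+1 /\ v <= t \/ u < t /\ v = t.+1 + u \/ 0 < u <= t /\ v = t + u \/
  u <= 1 /\ v = (2 * t).+2 \/ t.-1 <= u <= t /\ v = (2 * t).+1.
Proof.
rewrite /sym_closure /dd_base => lt_uv.
by case/orP => /orP [/existsP [[k lt_kt] /= hk] | h]; lia.
Qed.

Fact dd_b1_subproof : t.+1 < n. Proof. lia. Qed.
Definition dd_b1 : 'I_n := Ordinal dd_b1_subproof.

Fact dd_x_subproof : (2 * t).+1 < n. Proof. lia. Qed.
Definition dd_x : 'I_n := Ordinal dd_x_subproof.

Hypothesis t_gt1 : 1 < t.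

Lemma dd_triangle_sorted u v w : u < v -> v < w -> dd u v -> dd v w -> dd u w ->
  u < t /\ v = u.+1 /\
  (w = t.+1 + u \/ u = 0 /\ w = (2 * t).+2 \/ u = t.-1 /\ w = (2 * t).+1).
Proof.
move=> lt_uv lt_vw /(dd_edge_sorted lt_uv) e_uv /(dd_edge_sorted lt_vw) e_vw.
move=> /(dd_edge_sorted (ltn_trans lt_uv lt_vw)) e_uw.
by move: e_uv e_vw e_uw; lia.
Qed.

(* By [dd_triangle_sorted], the triangles of DD_t are a_kb_kc_k, a_1c_1y and a_tc_tx. *)
Lemma dd_waiter_wins_pairing (p : rel nat) (c x : 'I_n) :
  symmetric p -> irreflexive p -> (forall a b d, p a b -> p a d -> b = d) ->
  c != x -> (forall b, ~~ p c b) ->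
  (forall k, k < t -> blocked p (pred1 (val x)) k k.+1 (t.+1 + k)) ->
  blocked p (pred1 (val x)) 0 1 (2 * t).+2 ->
  blocked p (pred1 (val x)) t.-1 t (2 * t).+1 ->
  waiter_wins (dd_adj t) [set c] [set x].
Proof.
move=> p_sym p_irr p_fun cx c_unpaired block_abc block_acy block_acx.
apply: (@waiter_wins_pairing _ _ (fun u v : 'I_n => p u v)).
- by move=> u v; apply: p_sym.
- by move=> u; apply: p_irr.
- by move=> a b d pab pad; apply: val_inj; apply: p_fun pab pad.
- by rewrite disjoints1 inE.
- move=> a b pab; rewrite inE => /eqP ac.
  by move: pab; rewrite ac (negbTE (c_unpaired _)).
move=> u v w tri; rewrite /blocked /= !inE.
change (is_true (blocked p (pred1 (val x)) u v w)).
apply: (triangle_sorted_ind (sym_closure_sym _) (blocked_swap12 p_sym)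
          (blocked_swap23 p_sym) _ tri) => a b d lt_ab lt_bd e_ab e_bd e_ad.
have [lt_at [-> [->|[[-> ->]|[-> ->]]]]] :=
  dd_triangle_sorted lt_ab lt_bd e_ab e_bd e_ad.
- exact: block_abc.
- exact: block_acy.
- by rewrite prednK //; apply: ltnW.
Qed.

(* The pairs a_1c_1 and c_kb_k (2 <= k <= t). *)
Definition pairing_client_b1 : rel nat :=
  sym_closure (fun a b => ((a == 0) && (b == 1)) || ((1 < a <= t) && (b == t + a))).

(* The pairs a_1y, a_tc_t and a_kb_k (2 <= k < t). *)
Definition pairing_client_x : rel nat :=
  sym_closure (fun a b => [|| (a == 0) && (b == (2 * t).+2),
                              (a == t.-1) && (b == t)
                            | (0 < a < t.-1) && (b == t.+1 + a)]).

Lemma waiter_wins_client_b1 : waiter_wins (dd_adj t) [set dd_b1] [set dd_x].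
Proof.
apply: (dd_waiter_wins_pairing (p := pairing_client_b1) (sym_closure_sym _)).
all: rewrite /pairing_client_b1 /sym_closure /=.
- by move=> a; lia.
- by move=> a b d; lia.
- by rewrite -val_eqE /=; lia.
- by move=> b; lia.
- case=> [|k] lt_kt; first exact: blocked_pair12.
  by apply: blocked_pair23; lia.
- exact: blocked_pair12.
- by apply: blocked_claimed3 => /=.
Qed.

Lemma waiter_wins_client_x : waiter_wins (dd_adj t) [set dd_x] [set dd_b1].
Proof.
apply: (dd_waiter_wins_pairing (p := pairing_client_x) (sym_closure_sym _)).
all: rewrite /pairing_client_x /sym_closure /=.
- by move=> a; lia.
- by move=> a b d; lia.
- by rewrite -val_eqE /=; lia.
- by move=> b; lia.
- move=> k lt_kt; have [->|k_gt0] := posnP k.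
    by apply: blocked_claimed3 => /=; lia.
  have [->|k_neq] := eqVneq k t.-1; first by apply: blocked_pair12; lia.
  by apply: blocked_pair13; lia.
- by apply: blocked_pair13; lia.
- by apply: blocked_pair12; lia.
Qed.

End DD.

Theorem mainTheorem16 (t : nat) (ht : 2 <= t) : waiter_wins_game (dd_adj t).
Proof.
apply: (@ww_two _ _ set0 set0 (dd_b1 t) (dd_x t)); rewrite ?inE ?setU0 //.
- by rewrite -val_eqE /=; lia.
- exact: waiter_wins_client_b1.
- exact: waiter_wins_client_x.
Qed.
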